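(* Let $p$ be a prime, $k\ge 1$, and $G=\mathbb{Z}_{p^k}$. Then: (i) there is a deterministic query algorithm that, for every finite set $X$ and every function $f:G\to X$ hiding a subgroup $H\le G$, makes exactly $2$ queries and correctly decides whether $H$ is trivial; (ii) there is a deterministic query algorithm that, for every finite set $X$ and every function $f:G\to X$ hiding a subgroup $H\le G$, outputs $H$ and makes at most $2+\log_p\frac{|G|}{|H|}$ queries, i.e. $O\!\left(1+\log\frac{|G|}{|H|}\right)$ queries.
   Context: Hidden subgroup problem ($\mathsf{HSP}$): $G$ is a finite group (known to the algorithm), $X$ a finite set, and $f:G\to X$ is an unknown function with the promise that there is a subgroup $H\le G$ such that for all $g_1,g_2\in G$, $f(g_1)=f(g_2)$ iff $g_1H=g_2H$; we say $f$ hides $H$. The identification version asks to output $H$; the decision version asks whether $H$ is the trivial group $\{e\}$. A deterministic query algorithm accesses $f$ only by adaptively choosing elements $g\in G$ and receiving $f(g)$ (a query); its query complexity on $f$ is the number of queries made. $\mathbb{Z}_{p^k}$ is the additive group of integers modulo $p^k$. *)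

From mathcomp Require Import all_boot all_fingroup all_algebra.
Set Implicit Arguments. Unset Strict Implicit. Unset Printing Implicit Defensive.

(* A deterministic adaptive query algorithm (decision tree) with queries in G,
   answers in X and output in R. *)
Inductive qtree (G X R : Type) : Type :=
  | Ret of R
  | Query of G & (X -> qtree G X R).
Arguments Ret {G X R} _.
Arguments Query {G X R} _ _.

Fixpoint run (G X R : Type) (f : G -> X) (t : qtree G X R) : R * nat :=
  match t with
  | Ret r => (r, 0%N)
  | Query g k => let: (r, n) := run f (k (f g)) in (r, n.+1)
  end.

(* An algorithm for HSP must work uniformly for every answer set X; we model it
   as a term polymorphic in X : eqType, so it can only compare answers for
   equality (it cannot inspect X, e.g. its cardinality). *)
Definition query_alg (G R : Type) := forall X : eqType, qtree G X R.

Definition hides (gT : finGroupType) (X : Type) (f : gT -> X) (H : {set gT}) :=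
  forall g1 g2 : gT, f g1 = f g2 <-> (g1 *: H)%g = (g2 *: H)%g.

From mathcomp Require Import all_boot all_fingroup all_algebra all_solvable.
From mathcomp Require Import zify.
Set Implicit Arguments. Unset Strict Implicit. Unset Printing Implicit Defensive.

(* The subgroups of a cyclic group of order p^k form a chain: with
   m = log_p |H|, the subgroup H is generated by g^(p^(k-m)), and g^(p^i)
   lies in H exactly when k - m <= i.  Since f hides H, the test
   g^(p^i) \in H costs one query (compare f (g^(p^i)) with f 1).  So H is
   trivial iff f 1 != f (g^(p^(k-1))), and H is found by querying
   g^(p^0), g^(p^1), ... until the first element of H, i.e. after
   k - m + 1 queries beyond f 1, where k - m = log_p (|G| / |H|). *)

Lemma hides_eq1 (gT : finGroupType) (X : eqType) (f : gT -> X)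
    (H : {group gT}) (hf : hides f H) (y : gT) :
  (f y == f 1%g) = (y \in H).
Proof.
by apply/eqP/idP => [/hf/lcoset_eqP | yH];
  [| apply/hf/lcoset_eqP]; rewrite mem_lcoset invg1 mul1g.
Qed.

Section CyclicPGroup.

Variables (gT : finGroupType) (g : gT) (p k : nat).
Hypotheses (p_pr : prime p) (gen_g : [set: gT] = <[g]>%g)
           (order_g : #[g]%g = p ^ k).

Let p_gt1 : 1 < p. Proof. exact: prime_gt1. Qed.
Let cyclicT : cyclic [set: gT]. Proof. by rewrite gen_g cycle_cyclic. Qed.

Lemma card_cyclic_pgroup : #|gT| = p ^ k.
Proof. by rewrite -cardsT gen_g -orderE. Qed.

Lemma order_expg_pfactor i : i <= k -> #[g ^+ (p ^ i)]%g = p ^ (k - i).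
Proof.
by move=> le_ik; rewrite orderXdiv order_g ?dvdn_exp2l // expnB ?prime_gt0.
Qed.

Lemma card_subgroup_dvdn (H : {group gT}) : #|H| %| p ^ k.
Proof. by rewrite -card_cyclic_pgroup -cardsT cardSg ?subsetT. Qed.

Lemma logn_card_subgroup (H : {group gT}) : logn p #|H| <= k.
Proof.
by rewrite -(pfactorK k p_pr) dvdn_leq_log ?expn_gt0 ?prime_gt0
  ?card_subgroup_dvdn.
Qed.

Lemma card_subgroup_pfactor (H : {group gT}) : #|H| = p ^ logn p #|H|.
Proof.
by case/(dvdn_pfactor _ _ p_pr): (card_subgroup_dvdn H) => m _ ->;
  rewrite pfactorK.
Qed.

Lemma mem_expg_pfactor (H : {group gT}) i : i <= k ->
  ((g ^+ (p ^ i))%g \in H) = (k - logn p #|H| <= i).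
Proof.
move=> le_ik; have le_mk := logn_card_subgroup H.
rewrite -cycle_subG -(cardSg_cyclic cyclicT) ?subsetT // -orderE.
rewrite order_expg_pfactor // pfactor_dvdn ?cardG_gt0 //; lia.
Qed.

Lemma subgroup_cyclic_pgroupE (H : {group gT}) :
  H :=: <[g ^+ (p ^ (k - logn p #|H|))]>%g.
Proof.
apply/eqP; rewrite (eq_subG_cyclic cyclicT) ?subsetT // -orderE.
by rewrite order_expg_pfactor ?leq_subr // subKn ?logn_card_subgroup
  -?card_subgroup_pfactor.
Qed.

Lemma trivg_cyclic_pgroupE (H : {group gT}) :
  (H :==: 1)%g = (logn p #|H| == 0).
Proof.
by rewrite trivg_card1 {1}card_subgroup_pfactor -{1}(expn0 p) eqn_exp2l.
Qed.

Lemma logn_index_cyclic_pgroup (H : {group gT}) :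
  logn p (#|gT| %/ #|H|) = k - logn p #|H|.
Proof.
by rewrite logn_div -?cardsT ?cardSg ?subsetT // cardsT card_cyclic_pgroup
  pfactorK.
Qed.

Definition trivial_subgroup_test : query_alg gT bool :=
  fun X => Query 1%g (fun a => Query (g ^+ (p ^ k.-1))%g
                                  (fun b => Ret (a != b))).

Lemma run_trivial_subgroup_test (X : eqType) (f : gT -> X) (H : {group gT}) :
  1 <= k -> hides f H -> run f (trivial_subgroup_test X) = ((H :==: 1)%g, 2).
Proof.
move=> k_gt0 hf; congr (_, _).
rewrite eq_sym (hides_eq1 hf) mem_expg_pfactor ?leq_pred //.
rewrite trivg_cyclic_pgroupE; have := logn_card_subgroup H; lia.
Qed.

(* The answer a is f 1, the label of the coset H itself. *)
Fixpoint search_level (X : eqType) (a : X) (i n : nat)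
    : qtree gT X {set gT} :=
  if n is n'.+1 then
    Query (g ^+ (p ^ i))%g (fun b => if b == a then Ret <[g ^+ (p ^ i)]>%g
                                   else search_level a i.+1 n')
  else Ret <[g ^+ (p ^ i)]>%g.

Lemma run_search_level (X : eqType) (f : gT -> X) (H : {group gT}) n i :
  hides f H -> i + n = k -> i <= k - logn p #|H| ->
  (run f (search_level (f 1%g) i n)).1 = <[g ^+ (p ^ (k - logn p #|H|))]>%g
  /\ (run f (search_level (f 1%g) i n)).2 <= (k - logn p #|H| - i).+1.
Proof.
move=> hf; set j := k - logn p #|H|.
elim: n i => [|n IHn] i def_k le_ij /=.
  by have -> : j = i by rewrite /j; lia.
rewrite (hides_eq1 hf) mem_expg_pfactor; last by lia.
case: leqP => [le_ji | lt_ij] /=.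
  by have -> : j = i by lia.
have [] := IHn i.+1; [by lia | by [] |].
case: run => r c /= -> le_c; split => //; lia.
Qed.

Definition subgroup_search : query_alg gT {set gT} :=
  fun X => Query 1%g (fun a => search_level a 0 k).

Lemma run_subgroup_search (X : eqType) (f : gT -> X) (H : {group gT}) :
  hides f H ->
  (run f (subgroup_search X)).1 = H /\
  (run f (subgroup_search X)).2 <= 2 + logn p (#|gT| %/ #|H|).
Proof.
move=> hf; rewrite logn_index_cyclic_pgroup /=.
have [] := run_search_level hf (add0n k) (leq0n _).
case: run => r c /= -> le_c; rewrite -subgroup_cyclic_pgroupE; split => //; lia.
Qed.

End CyclicPGroup.

Theorem theorem1 (p k : nat) (hp : prime p) (hk : (1 <= k)%N) :
  (exists A : query_alg 'Z_(p ^ k) bool,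
     forall (X : finType) (f : 'Z_(p ^ k) -> X) (H : {group 'Z_(p ^ k)}),
       hides f H -> run f (A X) = ((H :==: 1)%g, 2%N))
  /\
  (exists A : query_alg 'Z_(p ^ k) {set 'Z_(p ^ k)},
     forall (X : finType) (f : 'Z_(p ^ k) -> X) (H : {group 'Z_(p ^ k)}),
       hides f H ->
       (run f (A X)).1 = H /\
       ((run f (A X)).2 <= 2 + logn p (#|'Z_(p ^ k)| %/ #|H|))%N).
Proof.
have gen_Zp1 : [set: 'Z_(p ^ k)] = <[Zp1 : 'Z_(p ^ k)]>%g by rewrite Zp_cycle.
have order_Zp1 : #[Zp1 : 'Z_(p ^ k)]%g = p ^ k.
  by rewrite order_Zp1 Zp_cast // -(expn0 p) ltn_exp2l ?prime_gt1.
split.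
  exists (trivial_subgroup_test Zp1 p k) => X f H.
  exact: run_trivial_subgroup_test.
exists (subgroup_search Zp1 p k) => X f H.
exact: run_subgroup_search.
Qed.
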